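(* For every non-empty partial metric space $(X,p_X)$ there exists a p-Cauchy completion $(\tilde X,i)$ of $X$ such that $i(X)$ is not symmetrically dense in $\tilde X$.
   Context: A partial metric on a set $X$ is a function $p_X\colon X\times X\to\mathbb{R}_{\geq0}$ such that for all $x,y,z\in X$: (P1) $p_X(x,x)=p_X(x,y)=p_X(y,y)$ implies $x=y$; (P2) $p_X(x,x)\leq p_X(x,y)$; (P3) $p_X(x,y)=p_X(y,x)$; (P4) $p_X(x,z)+p_X(y,y)\leq p_X(x,y)+p_X(y,z)$. For $x\in X$ and $\varepsilon>0$, $B_\varepsilon(x)=\{y\in X: p_X(x,y)<p_X(x,x)+\varepsilon\}$. A subset $A\subseteq X$ is dense in $X$ if for every $x\in X$ and $\varepsilon>0$ there is $y\in A$ with $y\in B_\varepsilon(x)$; it is symmetrically dense if for every $x\in X$ and $\varepsilon>0$ there is $y\in A$ with $x\in B_\varepsilon(y)$ and $y\in B_\varepsilon(x)$. A sequence $(x_n)$ in $X$ p-converges to $x\in X$ if $p_X(x,x)=\lim_{n\to\infty}p_X(x,x_n)=\lim_{n\to\infty}p_X(x_n,x_n)$; it is p-Cauchy if $\lim_{n,m\to\infty}p_X(x_n,x_m)$ exists and is finite. $X$ is p-Cauchy complete if every p-Cauchy sequence p-converges. An isometric embedding $i\colon X\to Y$ between partial metric spaces is a map with $p_Y(i(x),i(y))=p_X(x,y)$ for all $x,y$. A p-Cauchy completion of $X$ is a pair $(\bar X,i)$ where $\bar X$ is a p-Cauchy complete partial metric space and $i\colon X\to\bar X$ is an isometric embedding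 with $i(X)$ dense in $\bar X$. *)

From Stdlib Require Import Reals.
Open Scope R_scope.

Definition is_partial_metric {X : Type} (p : X -> X -> R) : Prop :=
  (forall x y, 0 <= p x y) /\
  (forall x y, p x x = p x y -> p x y = p y y -> x = y) /\
  (forall x y, p x x <= p x y) /\
  (forall x y, p x y = p y x) /\
  (forall x y z, p x z + p y y <= p x y + p y z).

Definition pball {X : Type} (p : X -> X -> R) (x : X) (eps : R) (y : X) : Prop :=
  p x y < p x x + eps.

Definition p_dense {X : Type} (p : X -> X -> R) (A : X -> Prop) : Prop :=
  forall x eps, 0 < eps -> exists y, A y /\ pball p x eps y.

Definition p_sym_dense {X : Type} (p : X -> X -> R) (A : X -> Prop) : Prop :=
  forall x eps, 0 < eps ->
    exists y, A y /\ pball p y eps x /\ pball p x eps y.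

Definition p_converges {X : Type} (p : X -> X -> R) (u : nat -> X) (x : X) : Prop :=
  Un_cv (fun n => p x (u n)) (p x x) /\ Un_cv (fun n => p (u n) (u n)) (p x x).

Definition p_Cauchy {X : Type} (p : X -> X -> R) (u : nat -> X) : Prop :=
  exists L : R, forall eps, 0 < eps -> exists N : nat,
    forall n m, (N <= n)%nat -> (N <= m)%nat -> Rabs (p (u n) (u m) - L) < eps.

Definition p_Cauchy_complete {X : Type} (p : X -> X -> R) : Prop :=
  forall u : nat -> X, p_Cauchy p u -> exists x, p_converges p u x.

Definition isometric_embedding {X Y : Type} (pX : X -> X -> R) (pY : Y -> Y -> R)
  (i : X -> Y) : Prop :=
  forall x y, pY (i x) (i y) = pX x y.

Definition image_of {X Y : Type} (i : X -> Y) (y : Y) : Prop := exists x, i x = y.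

Definition p_Cauchy_completion {X Y : Type} (pX : X -> X -> R) (pY : Y -> Y -> R)
  (i : X -> Y) : Prop :=
  is_partial_metric pY /\ p_Cauchy_complete pY /\
  isometric_embedding pX pY i /\ p_dense pY (image_of i).

From Stdlib Require Import Reals Lra Lia Classical ClassicalEpsilon ProofIrrelevance FunctionalExtensionality.
Open Scope R_scope.

(* A p-Cauchy sequence (u_n) is recorded by the function x |-> lim p(x, u_n); two
   such points g, h are at distance inf_x (g x + h x - p(x, x)), which equals
   lim p(u_n, v_n) for any representatives.  Every point is the p-limit of its
   embedded representative, which gives density, and replacing a p-Cauchy sequence
   of the completion by nearby image points gives completeness.

   Now adjoin a point ∞ at height 1 above a = i(x0):
   p(∞, y) = p(a, y) + 1 and p(∞, ∞) = p(a, a) + 1.  The result is still a complete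
   partial metric space in which i(X) is dense, since a lies in every ball around ∞.
   But ∞ lies in no ball of radius 1 around a point y of i(X), because
   p(y, ∞) = p(a, y) + 1 >= p(y, y) + 1. *)

Definition Un_cv2 (a : nat -> nat -> R) (L : R) : Prop :=
  forall eps, 0 < eps -> exists N : nat,
    forall n m, (N <= n)%nat -> (N <= m)%nat -> Rabs (a n m - L) < eps.

Lemma Un_cv_const (c : R) : Un_cv (fun _ => c) c.
Proof.
  intros eps Heps; exists 0%nat; intros n _.
  unfold Rdist; rewrite Rminus_diag, Rabs_R0; exact Heps.
Qed.

Lemma Un_cv2_diag (a : nat -> nat -> R) (L : R) :
  Un_cv2 a L -> Un_cv (fun n => a n n) L.
Proof.
  intros H eps Heps; destruct (H eps Heps) as [N HN].
  exists N; intros n Hn; apply HN; exact Hn.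
Qed.

Lemma Un_cv_close (a : nat -> R) (l c e : R) (N : nat) :
  Un_cv a l -> (forall n, (N <= n)%nat -> Rabs (a n - c) <= e) -> Rabs (l - c) <= e.
Proof.
  intros Hl Hc; apply Rnot_lt_le; intros Hgt.
  destruct (Hl (Rabs (l - c) - e)) as [M HM]; [lra|].
  specialize (HM (max N M) (Nat.le_max_r _ _)).
  specialize (Hc (max N M) (Nat.le_max_l _ _)).
  pose proof (Rdist_tri l c (a (max N M))) as Htri.
  unfold Rdist in *; rewrite Rabs_minus_sym in HM; lra.
Qed.

Lemma Un_cv2_of_cauchy (a : nat -> nat -> R) :
  (forall eps, 0 < eps -> exists N : nat, forall n m n' m',
     (N <= n)%nat -> (N <= m)%nat -> (N <= n')%nat -> (N <= m')%nat ->
     Rabs (a n m - a n' m') < eps) ->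
  exists L, Un_cv2 a L.
Proof.
  intros Ha.
  assert (Hdiag : Cauchy_crit (fun n => a n n)).
  { intros eps Heps; destruct (Ha eps Heps) as [N HN].
    exists N; intros n m Hn Hm; apply HN; assumption. }
  destruct (R_complete _ Hdiag) as [L HL]; exists L.
  intros eps Heps.
  destruct (Ha (eps / 2)) as [N1 H1]; [lra|].
  destruct (HL (eps / 2)) as [N2 H2]; [lra|].
  set (N := max N1 N2); exists N; intros n m Hn Hm.
  specialize (H1 n m N N ltac:(lia) ltac:(lia) ltac:(lia) ltac:(lia)).
  specialize (H2 N ltac:(lia)).
  pose proof (Rdist_tri (a n m) L (a N N)) as Htri.
  unfold Rdist in *; lra.
Qed.

Lemma Un_cv_perturb (a b e : nat -> R) (l : R) :
  Un_cv a l -> Un_cv e 0 -> (forall n, Rabs (b n - a n) <= e n) -> Un_cv b l.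
Proof.
  intros Ha He Hab eps Heps.
  destruct (Ha (eps / 2)) as [N1 H1]; [lra|].
  destruct (He (eps / 2)) as [N2 H2]; [lra|].
  exists (max N1 N2); intros n Hn.
  specialize (H1 n ltac:(lia)); specialize (H2 n ltac:(lia)); specialize (Hab n).
  pose proof (Rdist_tri (b n) l (a n)) as Htri.
  unfold Rdist in *; rewrite Rminus_0_r in H2; pose proof (Rle_abs (e n)); lra.
Qed.

Lemma Un_cv2_perturb (a b : nat -> nat -> R) (e : nat -> R) (L : R) :
  Un_cv2 a L -> Un_cv e 0 -> (forall n m, Rabs (b n m - a n m) <= e n + e m) ->
  Un_cv2 b L.
Proof.
  intros Ha He Hab eps Heps.
  destruct (Ha (eps / 2)) as [N1 H1]; [lra|].
  destruct (He (eps / 4)) as [N2 H2]; [lra|].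
  exists (max N1 N2); intros n m Hn Hm.
  specialize (H1 n m ltac:(lia) ltac:(lia)); specialize (Hab n m).
  pose proof (H2 n ltac:(lia)) as Hen; pose proof (H2 m ltac:(lia)) as Hem.
  pose proof (Rdist_tri (b n m) L (a n m)) as Htri.
  unfold Rdist in *; rewrite Rminus_0_r in Hen, Hem.
  pose proof (Rle_abs (e n)); pose proof (Rle_abs (e m)); lra.
Qed.

Definition is_inf {T : Type} (f : T -> R) (r : R) : Prop :=
  (forall x, r <= f x) /\ (forall eps, 0 < eps -> exists x, f x < r + eps).

Lemma is_inf_unique {T : Type} (f : T -> R) (r1 r2 : R) :
  is_inf f r1 -> is_inf f r2 -> r1 = r2.
Proof.
  intros [Hlb1 Happ1] [Hlb2 Happ2].
  destruct (Rtotal_order r1 r2) as [Hlt | [Heq | Hgt]]; [| exact Heq |].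
  - destruct (Happ1 (r2 - r1)) as [x Hx]; [lra|]; specialize (Hlb2 x); lra.
  - destruct (Happ2 (r1 - r2)) as [x Hx]; [lra|]; specialize (Hlb1 x); lra.
Qed.

Section PartialMetric.
Context {X : Type} (p : X -> X -> R) (Hp : is_partial_metric p).

Lemma pm_nonneg x y : 0 <= p x y. Proof. apply Hp. Qed.
Lemma pm_sep x y : p x x = p x y -> p x y = p y y -> x = y. Proof. apply Hp. Qed.
Lemma pm_self x y : p x x <= p x y. Proof. apply Hp. Qed.
Lemma pm_sym x y : p x y = p y x. Proof. apply Hp. Qed.
Lemma pm_tri x y z : p x z + p y y <= p x y + p y z. Proof. apply Hp. Qed.

Lemma pm_self_r x y : p y y <= p x y.
Proof. rewrite (pm_sym x y); apply pm_self. Qed.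

Lemma p_Cauchy_excess (u : nat -> X) : p_Cauchy p u ->
  forall eps, 0 < eps -> exists N : nat, forall n m,
    (N <= n)%nat -> (N <= m)%nat -> p (u n) (u m) - p (u m) (u m) < eps.
Proof.
  intros [L HL] eps Heps; destruct (HL (eps / 2)) as [N HN]; [lra|].
  exists N; intros n m Hn Hm.
  pose proof (HN n m Hn Hm) as Hnm; pose proof (HN m m Hm Hm) as Hmm.
  apply Rabs_def2 in Hnm, Hmm; lra.
Qed.

Lemma pm_quad x y x' y' :
  p x y - p x' y' <= (p x x' - p x' x') + (p y y' - p y' y').
Proof.
  pose proof (pm_tri x x' y); pose proof (pm_tri x' y' y).
  rewrite (pm_sym y' y) in *; lra.
Qed.

Lemma p_Cauchy_cross (u v : nat -> X) : p_Cauchy p u -> p_Cauchy p v ->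
  exists D, Un_cv2 (fun n m => p (u n) (v m)) D.
Proof.
  intros Hu Hv; apply Un_cv2_of_cauchy; intros eps Heps.
  destruct (p_Cauchy_excess u Hu (eps / 2)) as [N1 H1]; [lra|].
  destruct (p_Cauchy_excess v Hv (eps / 2)) as [N2 H2]; [lra|].
  exists (max N1 N2); intros n m n' m' Hn Hm Hn' Hm'.
  pose proof (pm_quad (u n) (v m) (u n') (v m')).
  pose proof (pm_quad (u n') (v m') (u n) (v m)).
  pose proof (H1 n n' ltac:(lia) ltac:(lia)); pose proof (H1 n' n ltac:(lia) ltac:(lia)).
  pose proof (H2 m m' ltac:(lia) ltac:(lia)); pose proof (H2 m' m ltac:(lia) ltac:(lia)).
  apply Rabs_def1; lra.
Qed.

Lemma pm_shift w s t e :
  Rabs (p s t - p s s) <= e -> Rabs (p t t - p s s) <= e -> Rabs (p w t - p w s) <= 2 * e.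
Proof.
  intros Hst Htt.
  pose proof (Rle_abs (p s t - p s s)); pose proof (Rabs_pos (p s t - p s s)).
  pose proof (Rle_abs (p s s - p t t)) as Htt'; rewrite Rabs_minus_sym in Htt'.
  pose proof (pm_tri w s t); pose proof (pm_tri w t s); pose proof (pm_self s t).
  rewrite (pm_sym t s) in *; apply Rabs_le; lra.
Qed.

Lemma p_converges_approx (u : nat -> X) (y : X) : p_converges p u y ->
  forall e, 0 < e -> exists n,
    Rabs (p y (u n) - p y y) <= e /\ Rabs (p (u n) (u n) - p y y) <= e.
Proof.
  intros [Hcross Hself] e He.
  destruct (Hcross e He) as [N1 H1]; destruct (Hself e He) as [N2 H2].
  exists (max N1 N2); unfold Rdist in *; split; apply Rlt_le.
  - apply H1; lia.
  - apply H2; lia.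
Qed.

Lemma p_dense_of_seq_dense {Z : Type} (j : Z -> X) :
  (forall y, exists u : nat -> Z, p_converges p (fun n => j (u n)) y) ->
  p_dense p (image_of j).
Proof.
  intros Hj y eps Heps; destruct (Hj y) as [u [Hcross _]].
  destruct (Hcross eps Heps) as [N HN]; specialize (HN N (le_n N)).
  exists (j (u N)); split; [exists (u N); reflexivity|].
  unfold pball, Rdist in *; apply Rabs_def2 in HN; lra.
Qed.

End PartialMetric.

Lemma isometric_p_Cauchy {X Y : Type} (p : X -> X -> R) (q : Y -> Y -> R) (j : X -> Y)
  (u : nat -> X) :
  isometric_embedding p q j -> p_Cauchy q (fun n => j (u n)) -> p_Cauchy p u.
Proof.
  intros Hj [L HL]; exists L; intros eps Heps; destruct (HL eps Heps) as [N HN].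
  exists N; intros n m Hn Hm; rewrite <- Hj; apply HN; assumption.
Qed.

Section Completion.
Context {X : Type} (p : X -> X -> R) (Hp : is_partial_metric p).

Definition represents (g : X -> R) (u : nat -> X) : Prop :=
  p_Cauchy p u /\ forall x, Un_cv (fun n => p x (u n)) (g x).

Definition completion : Type := {g : X -> R | exists u, represents g u}.

(* The infimum exists (and [epsilon] picks it) by [pC_cv2]. *)
Definition pC (a b : completion) : R :=
  epsilon (inhabits 0) (is_inf (fun x => proj1_sig a x + proj1_sig b x - p x x)).

Lemma represents_inf (g h : X -> R) (u v : nat -> X) (D : R) :
  represents g u -> represents h v -> Un_cv2 (fun n m => p (u n) (v m)) D ->
  is_inf (fun x => g x + h x - p x x) D.
Proof.
  intros [Hu Hgu] [Hv Hhv] HD; split.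
  - intros x.
    apply (@Rle_cv_lim (fun n => p (u n) (v n)) (fun n => p x (u n) + p x (v n) - p x x)).
    + intros n; pose proof (pm_tri p Hp (u n) x (v n)).
      rewrite (pm_sym p Hp (u n) x) in *; lra.
    + exact (Un_cv2_diag _ _ HD).
    + apply CV_minus; [apply CV_plus; auto | apply Un_cv_const].
  - intros eps Heps; destruct Hu as [L HL].
    destruct (HL (eps / 4)) as [N1 H1]; [lra|].
    destruct (HD (eps / 4)) as [N2 H2]; [lra|].
    set (N := max N1 N2); exists (u N).
    assert (Hg : Rabs (g (u N) - L) <= eps / 4).
    { apply (Un_cv_close _ _ _ _ N (Hgu (u N))); intros n Hn; apply Rlt_le, H1; lia. }
    assert (Hh : Rabs (h (u N) - D) <= eps / 4).
    { apply (Un_cv_close _ _ _ _ N (Hhv (u N))); intros n Hn; apply Rlt_le, H2; lia. }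
    specialize (H1 N N ltac:(lia) ltac:(lia)); apply Rabs_def2 in H1.
    pose proof (Rle_abs (g (u N) - L)); pose proof (Rle_abs (h (u N) - D)); lra.
Qed.

Lemma pC_cv2 (a b : completion) (u v : nat -> X) :
  represents (proj1_sig a) u -> represents (proj1_sig b) v ->
  Un_cv2 (fun n m => p (u n) (v m)) (pC a b).
Proof.
  intros Ha Hb.
  destruct (p_Cauchy_cross p Hp u v (proj1 Ha) (proj1 Hb)) as [D HD].
  pose proof (represents_inf _ _ u v D Ha Hb HD) as Hinf.
  replace (pC a b) with D; [exact HD|].
  apply (is_inf_unique _ _ _ Hinf); unfold pC; apply epsilon_spec; exists D; exact Hinf.
Qed.

Lemma pC_cv (a b : completion) (u v : nat -> X) :
  represents (proj1_sig a) u -> represents (proj1_sig b) v ->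
  Un_cv (fun n => p (u n) (v n)) (pC a b).
Proof. intros Ha Hb; exact (Un_cv2_diag _ _ (pC_cv2 a b u v Ha Hb)). Qed.

Lemma completion_rep (a : completion) : exists u, represents (proj1_sig a) u.
Proof. exact (proj2_sig a). Qed.

Lemma pC_nonneg a b : 0 <= pC a b.
Proof.
  destruct (completion_rep a) as [u Hu]; destruct (completion_rep b) as [v Hv].
  apply (@Rle_cv_lim (fun _ => 0) (fun n => p (u n) (v n))).
  - intros n; apply (pm_nonneg p Hp).
  - apply Un_cv_const.
  - apply pC_cv; assumption.
Qed.

Lemma pC_self a b : pC a a <= pC a b.
Proof.
  destruct (completion_rep a) as [u Hu]; destruct (completion_rep b) as [v Hv].
  apply (@Rle_cv_lim (fun n => p (u n) (u n)) (fun n => p (u n) (v n))).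
  - intros n; apply (pm_self p Hp).
  - apply pC_cv; assumption.
  - apply pC_cv; assumption.
Qed.

Lemma pC_sym a b : pC a b = pC b a.
Proof.
  destruct (completion_rep a) as [u Hu]; destruct (completion_rep b) as [v Hv].
  apply (UL_sequence (fun n => p (u n) (v n))); [apply pC_cv; assumption|].
  apply (Un_cv_ext (fun n => p (v n) (u n))); [intros n; apply (pm_sym p Hp)|].
  apply pC_cv; assumption.
Qed.

Lemma pC_tri a b c : pC a c + pC b b <= pC a b + pC b c.
Proof.
  destruct (completion_rep a) as [u Hu]; destruct (completion_rep b) as [v Hv].
  destruct (completion_rep c) as [w Hw].
  apply (@Rle_cv_lim (fun n => p (u n) (w n) + p (v n) (v n))
                    (fun n => p (u n) (v n) + p (v n) (w n))).
  - intros n; apply (pm_tri p Hp).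
  - apply CV_plus; apply pC_cv; assumption.
  - apply CV_plus; apply pC_cv; assumption.
Qed.

Lemma pC_val_le a b x : proj1_sig a x <= proj1_sig b x + pC b a - pC b b.
Proof.
  destruct (completion_rep a) as [u Hu]; destruct (completion_rep b) as [v Hv].
  apply (@Rle_cv_lim (fun n => p x (u n))
                    (fun n => p x (v n) + p (v n) (u n) - p (v n) (v n))).
  - intros n; pose proof (pm_tri p Hp x (v n) (u n)); lra.
  - apply (proj2 Hu).
  - apply CV_minus; [apply CV_plus; [apply (proj2 Hv) |] |]; apply pC_cv; assumption.
Qed.

Lemma pC_sep a b : pC a a = pC a b -> pC a b = pC b b -> a = b.
Proof.
  intros Haa Hbb; apply eq_sig_hprop; [intros; apply proof_irrelevance|].
  apply functional_extensionality; intros x.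
  pose proof (pC_val_le a b x); pose proof (pC_val_le b a x).
  rewrite (pC_sym b a) in *; lra.
Qed.

Lemma pC_partial_metric : is_partial_metric pC.
Proof.
  split; [exact pC_nonneg|]; split; [exact pC_sep|].
  split; [exact pC_self|]; split; [exact pC_sym | exact pC_tri].
Qed.

Lemma represents_const x : represents (fun z => p z x) (fun _ => x).
Proof.
  split; [| intros z; apply Un_cv_const].
  exists (p x x); intros eps Heps; exists 0%nat; intros n m _ _.
  rewrite Rminus_diag, Rabs_R0; exact Heps.
Qed.

Definition embed (x : X) : completion :=
  exist _ (fun z => p z x) (ex_intro _ (fun _ => x) (represents_const x)).

Lemma embed_isometric : isometric_embedding p pC embed.
Proof.
  intros x y; apply (UL_sequence (fun _ => p x y)); [| apply Un_cv_const].
  apply (pC_cv (embed x) (embed y)); apply represents_const.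
Qed.

Lemma pC_embed_r a z : pC a (embed z) = proj1_sig a z.
Proof.
  destruct (completion_rep a) as [u Hu].
  apply (UL_sequence (fun n => p (u n) z)).
  - apply (pC_cv a (embed z) u (fun _ => z) Hu (represents_const z)).
  - apply (Un_cv_ext (fun n => p z (u n))); [intros n; apply (pm_sym p Hp)|].
    apply (proj2 Hu).
Qed.

Lemma represents_diag (g : X -> R) (u : nat -> X) (L : R) :
  represents g u -> Un_cv2 (fun n m => p (u n) (u m)) L -> Un_cv (fun n => g (u n)) L.
Proof.
  intros [_ Hg] HL eps Heps; destruct (HL (eps / 2)) as [N HN]; [lra|].
  exists N; intros n Hn; unfold Rdist; apply Rle_lt_trans with (eps / 2); [|lra].
  apply (Un_cv_close _ _ _ _ N (Hg (u n))); intros m Hm; apply Rlt_le, HN; assumption.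
Qed.

Lemma embed_converges (a : completion) (u : nat -> X) :
  represents (proj1_sig a) u -> p_converges pC (fun n => embed (u n)) a.
Proof.
  intros Hu; pose proof (pC_cv2 a a u u Hu Hu) as Hself; split.
  - apply (Un_cv_ext (fun n => proj1_sig a (u n))).
    + intros n; symmetry; apply pC_embed_r.
    + exact (represents_diag _ _ _ Hu Hself).
  - apply (Un_cv_ext (fun n => p (u n) (u n))).
    + intros n; symmetry; apply embed_isometric.
    + exact (Un_cv2_diag _ _ Hself).
Qed.

Lemma embed_seq_dense (a : completion) :
  exists u, p_converges pC (fun n => embed (u n)) a.
Proof.
  destruct (completion_rep a) as [u Hu]; exists u; exact (embed_converges a u Hu).
Qed.

Lemma p_Cauchy_represented (u : nat -> X) : p_Cauchy p u -> exists g, represents g u.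
Proof.
  intros Hu.
  assert (Hcv : forall x, exists l, Un_cv (fun n => p x (u n)) l).
  { intros x.
    destruct (p_Cauchy_cross p Hp (fun _ => x) u (proj1 (represents_const x)) Hu) as [l Hl].
    exists l; exact (Un_cv2_diag _ _ Hl). }
  destruct (choice _ Hcv) as [g Hg]; exists g; split; assumption.
Qed.

Lemma embed_cauchy_converges (u : nat -> X) :
  p_Cauchy pC (fun n => embed (u n)) -> exists a, p_converges pC (fun n => embed (u n)) a.
Proof.
  intros HC.
  destruct (p_Cauchy_represented u (isometric_p_Cauchy p pC embed u embed_isometric HC))
    as [g Hg].
  exists (exist _ g (ex_intro _ u Hg) : completion).
  exact (embed_converges (exist _ g (ex_intro _ u Hg)) u Hg).
Qed.

End Completion.

Section CompletenessCriterion.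
Context {X Y : Type} (q : Y -> Y -> R) (Hq : is_partial_metric q) (j : X -> Y).
Hypothesis j_seq_dense : forall y, exists u : nat -> X, p_converges q (fun n => j (u n)) y.
Hypothesis j_cauchy_converges : forall u : nat -> X,
  p_Cauchy q (fun n => j (u n)) -> exists z, p_converges q (fun n => j (u n)) z.

(* Replace each [s k] by an image point [j (x k)] at distance [e k] from it; the
   image sequence is p-Cauchy with the same limit, and its p-limit is one of [s]. *)
Lemma complete_of_seq_dense_image : p_Cauchy_complete q.
Proof.
  intros s [L HL].
  set (e := fun k : nat => 1 / 2 ^ k).
  assert (He : Un_cv e 0) by apply cv_pow_half.
  assert (Happrox : forall k, exists x,
    Rabs (q (s k) (j x) - q (s k) (s k)) <= e k / 2 /\
    Rabs (q (j x) (j x) - q (s k) (s k)) <= e k / 2).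
  { intros k; destruct (j_seq_dense (s k)) as [u Hu].
    destruct (p_converges_approx q _ _ Hu (e k / 2)) as [n Hn].
    - unfold e; pose proof (pow_lt 2 k ltac:(lra)); apply Rdiv_lt_0_compat;
        [apply Rdiv_lt_0_compat|]; lra.
    - exists (u n); exact Hn. }
  destruct (choice _ Happrox) as [x Hx].
  assert (Hshift : forall w k, Rabs (q w (j (x k)) - q w (s k)) <= e k).
  { intros w k; destruct (Hx k) as [H1 H2].
    replace (e k) with (2 * (e k / 2)) by field; exact (pm_shift q Hq w _ _ _ H1 H2). }
  assert (Hcauchy : Un_cv2 (fun n m => q (j (x n)) (j (x m))) L).
  { apply (Un_cv2_perturb _ _ e L HL He); intros n m.
    pose proof (Hshift (j (x n)) m) as Hm; pose proof (Hshift (s m) n) as Hn.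
    rewrite (pm_sym q Hq (s m)), (pm_sym q Hq (s m) (s n)) in Hn.
    pose proof (Rdist_tri (q (j (x n)) (j (x m))) (q (s n) (s m)) (q (j (x n)) (s m))).
    unfold Rdist in *; lra. }
  destruct (j_cauchy_converges x (ex_intro _ L Hcauchy)) as [z [Hz Hzz]].
  assert (HzL : q z z = L) by exact (UL_sequence _ _ _ Hzz (Un_cv2_diag _ _ Hcauchy)).
  exists z; split.
  - apply (Un_cv_perturb _ _ e _ Hz He); intros n.
    rewrite Rabs_minus_sym; apply Hshift.
  - rewrite HzL; exact (Un_cv2_diag _ _ HL).
Qed.

End CompletenessCriterion.

Section AdjoinPoint.
Context {Y : Type} (q : Y -> Y -> R) (Hq : is_partial_metric q) (a : Y).

Definition adjoin (s t : Y + unit) : R :=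
  match s, t with
  | inl y, inl y' => q y y'
  | inl y, inr _ | inr _, inl y => q a y + 1
  | inr _, inr _ => q a a + 1
  end.

Lemma adjoin_partial_metric : is_partial_metric adjoin.
Proof.
  pose proof (pm_nonneg q Hq) as Nn; pose proof (pm_self q Hq) as Sf.
  pose proof (pm_self_r q Hq) as Sr; pose proof (pm_sym q Hq) as Sy.
  pose proof (pm_tri q Hq) as Tr.
  split; [|split; [|split; [|split]]].
  - intros [x|[]] [y|[]]; simpl.
    + apply Nn.
    + pose proof (Nn a x); lra.
    + pose proof (Nn a y); lra.
    + pose proof (Nn a a); lra.
  - intros [x|[]] [y|[]]; simpl; intros E1 E2.
    + f_equal; apply (pm_sep q Hq); assumption.
    + pose proof (Sr a x); lra.
    + pose proof (Sr a y); lra.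
    + reflexivity.
  - intros [x|[]] [y|[]]; simpl.
    + apply Sf.
    + pose proof (Sr a x); lra.
    + pose proof (Sf a y); lra.
    + lra.
  - intros [x|[]] [y|[]]; simpl; reflexivity || apply Sy.
  - intros [x|[]] [y|[]] [z|[]]; simpl.
    + apply Tr.
    + pose proof (Tr a y x); rewrite (Sy y x) in *; lra.
    + pose proof (Tr x a z); rewrite (Sy x a) in *; lra.
    + pose proof (Sr a x); lra.
    + pose proof (Tr a y z); lra.
    + pose proof (Sf a y); pose proof (Sr a y); lra.
    + pose proof (Sf a z); lra.
    + lra.
Qed.

Lemma adjoin_complete : p_Cauchy_complete q -> p_Cauchy_complete adjoin.
Proof.
  intros Hc u [L HL].
  destruct (classic (forall N, exists n, (N <= n)%nat /\ u n = inr tt)) as [Hinf | Hfin].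
  - assert (Hcv : Un_cv (fun n => adjoin (inr tt) (u n)) L).
    { intros eps Heps; destruct (HL eps Heps) as [N HN]; exists N; intros n Hn.
      destruct (Hinf N) as [m [Hm Hum]]; specialize (HN m n Hm Hn).
      rewrite Hum in HN; exact HN. }
    assert (HL' : adjoin (inr tt) (inr tt) = L).
    { apply cond_eq; intros eps Heps; destruct (HL eps Heps) as [N HN].
      destruct (Hinf N) as [m [Hm Hum]]; specialize (HN m m Hm Hm).
      rewrite Hum in HN; exact HN. }
    exists (inr tt); split; rewrite HL'; [exact Hcv | exact (Un_cv2_diag _ _ HL)].
  - apply not_all_ex_not in Hfin as [N HN].
    set (w := fun k => match u (k + N)%nat with inl y => y | inr _ => a end).
    assert (Hw : forall k, u (k + N)%nat = inl (w k)).
    { intros k; unfold w; destruct (u (k + N)%nat) as [y|[]] eqn:E; [reflexivity|].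
      exfalso; apply HN; exists (k + N)%nat; split; [lia | exact E]. }
    assert (Hwc : p_Cauchy q w).
    { exists L; intros eps Heps; destruct (HL eps Heps) as [M HM]; exists M.
      intros k l Hk Hl; specialize (HM (k + N)%nat (l + N)%nat ltac:(lia) ltac:(lia)).
      rewrite !Hw in HM; exact HM. }
    destruct (Hc w Hwc) as [z [Hz Hzz]].
    exists (inl z); split; apply (CV_shift _ N);
      [apply (Un_cv_ext (fun k => q z (w k))) | apply (Un_cv_ext (fun k => q (w k) (w k)))];
      try assumption; intros k; rewrite Hw; reflexivity.
Qed.

Lemma adjoin_dense {X : Type} (j : X -> Y) (x0 : X) :
  j x0 = a -> p_dense q (image_of j) -> p_dense adjoin (image_of (fun x => inl (j x))).
Proof.
  intros Hx0 Hj [y|[]] eps Heps.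
  - destruct (Hj y eps Heps) as [_ [[x <-] Hball]].
    exists (inl (j x)); split; [exists x; reflexivity | exact Hball].
  - exists (inl a); split; [exists x0; rewrite Hx0; reflexivity|].
    unfold pball; simpl; lra.
Qed.

Lemma adjoin_not_sym_dense (A : Y + unit -> Prop) :
  ~ A (inr tt) -> ~ p_sym_dense adjoin A.
Proof.
  intros HA Hdense.
  destruct (Hdense (inr tt) 1 ltac:(lra)) as [[y|[]] [Hy [Hball _]]]; [|contradiction].
  unfold pball in Hball; simpl in Hball.
  pose proof (pm_self_r q Hq a y); lra.
Qed.

End AdjoinPoint.

Theorem theorem1p4 (X : Type) (pX : X -> X -> R) :
  is_partial_metric pX -> inhabited X ->
  exists (Y : Type) (pY : Y -> Y -> R) (i : X -> Y),
    p_Cauchy_completion pX pY i /\ ~ p_sym_dense pY (image_of i).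
Proof.
  intros Hp [x0].
  pose proof (pC_partial_metric pX Hp) as HC.
  exists (completion pX + unit)%type, (adjoin (pC pX) (embed pX x0)),
    (fun x => inl (embed pX x)).
  split; [split; [|split; [|split]]|].
  - exact (adjoin_partial_metric _ HC _).
  - apply adjoin_complete, (complete_of_seq_dense_image _ HC (embed pX)).
    + exact (embed_seq_dense pX Hp).
    + exact (embed_cauchy_converges pX Hp).
  - exact (embed_isometric pX Hp).
  - apply (adjoin_dense _ _ (embed pX) x0 eq_refl).
    exact (p_dense_of_seq_dense _ (embed pX) (embed_seq_dense pX Hp)).
  - apply (adjoin_not_sym_dense _ HC); intros [x Hx]; discriminate.
Qed.
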